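(* If $G$ is a connected graph of order $n$ with minimum degree $\delta(G)\ge (n-2)/3$, then $G$ is detour covered.
   Context: All graphs are finite and simple. A detour of a graph is a longest path in it. A graph is detour covered if every vertex lies in some detour. *)

From mathcomp Require Import all_boot.
Set Implicit Arguments. Unset Strict Implicit. Unset Printing Implicit Defensive.

Definition simple_graph (T : finType) (e : rel T) : Prop :=
  symmetric e /\ irreflexive e.

Definition is_gpath (T : finType) (e : rel T) (p : seq T) : bool :=
  match p with
  | [::] => false
  | x :: q => path e x q && uniq p
  end.

Definition gpath_length (T : finType) (p : seq T) : nat := (size p).-1.

Definition is_detour (T : finType) (e : rel T) (p : seq T) : Prop :=
  is_gpath e p /\
  forall q : seq T, is_gpath e q -> gpath_length q <= gpath_length p.

Definition detour_covered (T : finType) (e : rel T) : Prop :=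
  forall v : T, exists p : seq T, is_detour e p /\ v \in p.

Definition connected_graph (T : finType) (e : rel T) : Prop :=
  forall x y : T, connect e x y.

Definition degree (T : finType) (e : rel T) (v : T) : nat := #|[set w | e v w]|.

From mathcomp Require Import all_boot zify.
From Stdlib Require Import Classical_Prop.
Set Implicit Arguments. Unset Strict Implicit. Unset Printing Implicit Defensive.

(* Suppose v lies on no detour; let detours have L vertices and pick a detour
   P for which the component C of v in G - P is smallest.  Paths through v
   have fewer than L vertices.  For z in C at the end of a path Q inside C
   through v, this places every neighbour of z on P at least |Q| steps from
   both ends of P, and two such neighbours are never 1 or 2 steps apart: one
   step would let z lengthen P, two steps would let z replace the vertex in
   between, giving a detour whose component misses z.  Hence
   3 deg_P(z) + 2|Q| <= L, and since L + |C| <= n <= 3 deg(z) + 2, z has at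
   least |Q| neighbours in C, so not all of them lie on Q.
   Apply this to the end y of a longest path in C through v: all neighbours
   of y in C lie on that path, so y has no neighbour on P.  Adding the degree
   condition at y and at the ends a, b of P to the Ore-type bound
   deg(a) + deg(b) < L (a crossing would close P into a cycle, which
   connectivity would extend) gives deg(y) >= |C| - 1, so the path spans C
   and closes into a cycle; rotated to end at a vertex of C adjacent to P, it
   contradicts the count again. *)

Lemma ex_argmin (A : Type) (Q : A -> Prop) (f : A -> nat) :
  (exists a, Q a) -> exists2 a, Q a & forall b, Q b -> f a <= f b.
Proof.
move=> [a Qa]; move: {2}(f a) (leqnn (f a)) => n.
elim: n a Qa => [|n IH] a Qa fa.
  by exists a => // b _; move: fa; rewrite leqn0 => /eqP ->.
have [[b Qb fb]|amin] := classic (exists2 b, Q b & f b < f a).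
  by apply: (IH b Qb); rewrite -ltnS (leq_trans fb fa).
by exists a => // b Qb; rewrite leqNgt; apply/negP => fb; apply: amin; exists b.
Qed.

Lemma ex_argmax (A : Type) (Q : A -> Prop) (f : A -> nat) m :
  (exists a, Q a) -> (forall a, Q a -> f a <= m) ->
  exists2 a, Q a & forall b, Q b -> f b <= f a.
Proof.
move=> exQ fm; have [a Qa amin] := ex_argmin (fun a => m - f a) exQ.
by exists a => // b Qb; move: (amin b Qb) (fm a Qa) (fm b Qb); lia.
Qed.

Lemma path_gap_last k x s :
  path (fun i j => i + k <= j) x s -> x + k * size s <= last x s.
Proof.
elim: s x => [|y s IH] x /=; first by rewrite muln0 addn0.
by case/andP=> xy /IH; rewrite mulnS; lia.
Qed.

Lemma count_shift_le (A : Type) (a b : pred A) (x0 : A) x s :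
  (forall i, i < size s -> a (nth x0 s i) -> b (nth x0 (x :: s) i) -> False) ->
  count a s + count b (belast x s) <= size s.
Proof.
elim: s x => [|y s IH] x //= nocross.
have := IH y (fun i => nocross i.+1); have := nocross 0 isT.
by case: (a y) (b x) => [] [] /= => [/(_ isT isT)|_|_|_] //; lia.
Qed.

Lemma count_card_uniq (T : finType) (a : pred T) s :
  uniq s -> count a s = #|[set w in s | a w]|.
Proof.
move=> us; rewrite -size_filter -(card_uniqP (filter_uniq a us)) -cardsE.
by apply: eq_card => w; rewrite !inE mem_filter andbC.
Qed.

Section SeqEnds.
Variables (A : Type) (x0 : A).

Lemma head_rev s : head x0 (rev s) = last x0 s.
Proof. by case/lastP: s => // s x; rewrite rev_rcons last_rcons. Qed.

Lemma last_rev s : last x0 (rev s) = head x0 s.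
Proof. by case: s => // x s; rewrite rev_cons last_rcons. Qed.

Lemma head_drop i s : head x0 (drop i s) = nth x0 s i.
Proof. by rewrite -nth0 nth_drop addn0. Qed.

Lemma last_drop i s : i < size s -> last x0 (drop i s) = last x0 s.
Proof.
by move=> si; rewrite -[in RHS](cat_take_drop i s) last_cat (drop_nth x0 si).
Qed.

Lemma last_take i s : i < size s -> last x0 (take i.+1 s) = nth x0 s i.
Proof. by move=> si; rewrite (take_nth x0 si) last_rcons. Qed.

End SeqEnds.

Lemma uniq_take_notin_drop (A : eqType) (s : seq A) i k x :
  uniq s -> i <= k -> x \in take i s -> x \notin drop k s.
Proof.
move=> us ik; rewrite -(take_takel s ik) => /mem_take xt.
move: us; rewrite -{1}(cat_take_drop k s) cat_uniq => /and3P[_ /hasPn tk _].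
by apply: contraL xt => /tk.
Qed.

Section GraphPaths.
Variables (T : finType) (e : rel T).
Local Notation gp := (is_gpath e).

Lemma is_gpath_cons x s : gp (x :: s) = path e x s && uniq (x :: s).
Proof. by []. Qed.

Lemma gpath_uniq s : gp s -> uniq s.
Proof. by case: s => // x s /andP[]. Qed.

Lemma gpath_size s : gp s -> size s <= #|T|.
Proof. by move/gpath_uniq/card_uniqP <-; apply: max_card. Qed.

Lemma gpath_cat d s1 s2 : gp s1 -> gp s2 -> e (last d s1) (head d s2) ->
  {in s1, forall w, w \notin s2} -> gp (s1 ++ s2).
Proof.
case: s1 => [|x s1] //; case: s2 => [|y s2] // /andP[p1 u1] /andP[p2 u2] xy dis.
rewrite cat_cons is_gpath_cons -cat_cons cat_path cat_uniq u1 u2 p1 andbT.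
apply/andP; split; first by rewrite /= xy.
by apply/hasPn => w w2; apply/negP => /dis; rewrite w2.
Qed.

Lemma gpath_catl s1 s2 : s1 != [::] -> gp (s1 ++ s2) -> gp s1.
Proof.
case: s1 => [|x s1] // _.
rewrite cat_cons !is_gpath_cons -cat_cons cat_path cat_uniq.
by case/andP=> /andP[-> _] /andP[-> _].
Qed.

Lemma gpath_catr s1 s2 : s2 != [::] -> gp (s1 ++ s2) -> gp s2.
Proof.
case: s2 => [|y s2] // _; case: s1 => [|x s1] //.
rewrite cat_cons !is_gpath_cons -cat_cons cat_path cat_uniq.
by case/andP=> /andP[_ /= /andP[_ ->]] /and3P[].
Qed.

Lemma gpath_take k s : 0 < k -> gp s -> gp (take k s).
Proof.
move=> k0 gs; apply: (@gpath_catl _ (drop k s)); last by rewrite cat_take_drop.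
by case: s gs k0 => // x s; case: k.
Qed.

Lemma gpath_drop k s : k < size s -> gp s -> gp (drop k s).
Proof.
move=> ks gs; apply: (@gpath_catr (take k s)); last by rewrite cat_take_drop.
by rewrite -size_eq0 size_drop subn_eq0 -ltnNge.
Qed.

Lemma gpath_cons d x s : gp s -> e x (head d s) -> x \notin s -> gp (x :: s).
Proof.
case: s => // y s /andP[ps us] xy xs.
by rewrite is_gpath_cons cons_uniq xs us /= xy ps.
Qed.

Lemma gpath_rcons d s x : gp s -> e (last d s) x -> x \notin s -> gp (rcons s x).
Proof.
move=> gs sx xs; rewrite -cats1; apply: (gpath_cat (d := d) gs) => // w ws.
by rewrite inE; apply: contraNneq xs => <-.
Qed.

Lemma gpath_rot d k s : gp s -> e (last d s) (head d s) -> gp (rot k s).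
Proof.
move=> gs closing; have [ks|ks] := leqP (size s) k; first by rewrite rot_oversize.
case: k ks => [|k] ks; first by rewrite rot0.
apply: (gpath_cat (d := d)); [exact: gpath_drop | exact: gpath_take | |].
  by rewrite last_drop //; move: closing; case: (s).
by move=> w wd; apply: contraL wd; apply: uniq_take_notin_drop (gpath_uniq gs) _.
Qed.

Lemma gpath_head_last d s x : gp s -> x \in s -> x != last d s ->
  head d s != last d s.
Proof.
case: s => // a [|b t] /andP[_ u] xs xl.
  by move: xs xl; rewrite inE => /eqP ->.
by apply/eqP => /= al; move: u; rewrite cons_uniq al mem_last.
Qed.

Lemma cycle_extension d c x z : gp c -> e (last d c) (head d c) ->
  x \in c -> z \notin c -> e z x -> exists2 p, gp p & size p = (size c).+1.
Proof.
move=> gc closing xc zc zx; case: (rot_to xc) => k s rot_c.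
exists (z :: x :: s); last by rewrite -(size_rot k c) rot_c.
apply: (gpath_cons (d := d)) => //; last by rewrite -rot_c mem_rot.
by rewrite -rot_c; apply: gpath_rot closing.
Qed.

Lemma degree_le_count x s : uniq s -> (forall w, e x w -> w \in s) ->
  degree e x <= count (e x) s.
Proof.
move=> us xs; rewrite (count_card_uniq _ us); apply: subset_leq_card.
by apply/subsetP => w; rewrite !inE => xw; rewrite xs.
Qed.

Hypothesis e_sym : symmetric e.

Lemma gpath_rev s : gp (rev s) = gp s.
Proof.
case: s => [|x s] //.
have -> : rev (x :: s) = last x s :: rev (belast x s) by rewrite lastI rev_rcons.
rewrite !is_gpath_cons -rev_rcons -lastI rev_uniq rev_path.
by congr (_ && _); apply: eq_path => y z; rewrite e_sym.
Qed.

End GraphPaths.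

(* The distinguished vertex v also serves as the default element of head, last
   and nth. *)
Section Detour.
Variables (T : finType) (e : rel T) (v : T).
Hypotheses (e_sym : symmetric e) (e_irr : irreflexive e).
Local Notation gp := (is_gpath e).

Definition avoid (P : seq T) : rel T :=
  [rel a b | [&& e a b, a \notin P & b \notin P]].

Definition comp_avoid (P : seq T) : {set T} := [set w | connect (avoid P) v w].

Lemma avoid_connect_sym Q : connect_sym (avoid Q).
Proof.
apply: sym_connect_sym => x y.
by rewrite /avoid /= e_sym [(x \notin Q) && _]andbC.
Qed.

Section Component.
Variable Q : seq T.
Hypothesis vQ : v \notin Q.

Lemma comp_notin w : w \in comp_avoid Q -> w \notin Q.
Proof.
have closedQ : closed (avoid Q) [predC Q].
  apply: (intro_closed (avoid_connect_sym Q)) => a b /and3P[_ _ bQ] _.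
  by rewrite inE.
by rewrite inE => /(closed_connect closedQ); rewrite !inE vQ.
Qed.

Lemma comp_closed u w :
  u \in comp_avoid Q -> e u w -> w \notin Q -> w \in comp_avoid Q.
Proof.
move=> uC uw wQ; move: (uC); rewrite !inE => /connect_trans; apply.
apply: connect1.
by rewrite /avoid /= uw wQ comp_notin.
Qed.

Lemma comp_gpath a b : a \in comp_avoid Q -> b \in comp_avoid Q ->
  exists S, [/\ gp S, head v S = a, last v S = b & {subset S <= comp_avoid Q}].
Proof.
rewrite !inE => va vb; have /connectP[p pp ->] : connect (avoid Q) a b.
  by apply: connect_trans vb; rewrite avoid_connect_sym.
case: (shortenP pp) => p' pp' up' _; exists (a :: p'); split=> //.
  by rewrite is_gpath_cons up' andbT; apply: sub_path pp' => x y /andP[].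
by move=> w /(path_connect pp') aw; rewrite inE (connect_trans va aw).
Qed.

End Component.

Section LongestPath.
Variables (L : nat) (P : seq T).
Hypothesis longest : forall p, gp p -> size p <= L.
Hypotheses (gP : gp P) (sizeP : size P = L).
Local Notation "s `_ i" := (nth v s i).

Lemma gpath_splice i k S : i < k < L -> gp S -> {in S, forall w, w \notin P} ->
  e P`_i (head v S) -> e (last v S) P`_k -> gp (take i.+1 P ++ S ++ drop k P).
Proof.
case/andP=> ik kL gS SP iS Sk; have kP : k < size P by rewrite sizeP.
apply: (gpath_cat (d := v)); first exact: gpath_take.
- apply: (gpath_cat (d := v) gS); first exact: gpath_drop.
    by rewrite head_drop.
  by move=> w /SP; apply: contra => /mem_drop.
- by rewrite last_take ?(ltn_trans ik) //; case: S gS iS {SP Sk}.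
move=> w wi; rewrite mem_cat negb_or (uniq_take_notin_drop (gpath_uniq gP) ik wi).
by rewrite andbT; apply: contraL (mem_take wi) => /SP.
Qed.

Lemma bypass_lt i k S : i < k < L -> gp S -> {in S, forall w, w \notin P} ->
  e P`_i (head v S) -> e (last v S) P`_k -> size S < k - i.
Proof.
move=> ikL gS SP iS Sk; have := longest (gpath_splice ikL gS SP iS Sk).
by rewrite !size_cat size_takel ?size_drop sizeP; move: ikL; lia.
Qed.

Lemma head_nbr_in w : e (head v P) w -> w \in P.
Proof.
move=> Pw; apply/negPn/negP => wP; rewrite e_sym in Pw.
by have := longest (gpath_cons gP Pw wP); rewrite /= sizeP ltnn.
Qed.

Lemma last_nbr_in w : e (last v P) w -> w \in P.
Proof.
move=> Pw; apply/negPn/negP => wP.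
by have := longest (gpath_rcons gP Pw wP); rewrite size_rcons sizeP ltnn.
Qed.

Lemma no_crossing z x i : z \notin P -> x \in P -> e z x -> i.+1 < L ->
  e (head v P) P`_i.+1 -> e (last v P) P`_i -> False.
Proof.
move=> zP xP zx iL hi li; have iP : i.+1 < size P by rewrite sizeP.
set c := take i.+1 P ++ rev (drop i.+1 P).
have memc : c =i P by move=> w; rewrite mem_cat mem_rev -mem_cat cat_take_drop.
have gc : gp c.
  apply: (gpath_cat (d := v)); first exact: gpath_take.
  - by rewrite gpath_rev //; apply: gpath_drop.
  - by rewrite last_take ?head_rev ?last_drop 1?e_sym // ltnW.
  move=> w wt; rewrite mem_rev.
  exact: uniq_take_notin_drop (gpath_uniq gP) _ wt.
have closing : e (last v c) (head v c).
  have -> : head v c = head v P by rewrite /c; case: (P) iP.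
  by rewrite last_cat last_rev (drop_nth v iP) e_sym.
have [p gp_p sp] : exists2 p, gp p & size p = (size c).+1.
  by apply: (cycle_extension gc closing _ _ zx); rewrite memc.
have := longest gp_p; rewrite sp size_cat size_rev size_drop size_takel.
  by rewrite subnKC ?sizeP ?ltnn // ltnW.
by rewrite sizeP ltnW.
Qed.

Lemma ends_degree_lt z x : z \notin P -> x \in P -> e z x ->
  degree e (head v P) + degree e (last v P) < L.
Proof.
move=> zP xP zx; have uP := gpath_uniq gP.
have nocross := no_crossing zP xP zx; rewrite -sizeP in nocross *.
apply: leq_ltn_trans (leq_add (degree_le_count uP head_nbr_in)
                               (degree_le_count uP last_nbr_in)) _.
case E: P gP nocross => [|y p] // _ nocross.
have cnt_h : count (e y) (y :: p) = count (e y) p by rewrite /= e_irr.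
have cnt_l : count (e (last y p)) (y :: p) = count (e (last y p)) (belast y p).
  by rewrite lastI -cats1 count_cat /= e_irr /= !addn0.
rewrite cnt_h cnt_l ltnS; apply: count_shift_le => i ip; apply: nocross.
by rewrite /= ltnS.
Qed.

Section MinimalComponent.
Hypothesis v_off_detours : forall p, gp p -> v \in p -> size p < L.
Hypothesis P_min :
  forall P', gp P' -> size P' = L -> #|comp_avoid P| <= #|comp_avoid P'|.
Hypothesis econn : connected_graph e.
Hypothesis dense : forall w, #|T| <= 3 * degree e w + 2.
Local Notation C := (comp_avoid P).

Lemma v_notin_P : v \notin P.
Proof. by apply/negP => /(v_off_detours gP); rewrite sizeP ltnn. Qed.

Lemma size_P_comp : L + #|C| <= #|T|.
Proof.
suff uPC : uniq (P ++ enum C).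
  by rewrite -sizeP cardE -size_cat -(card_uniqP uPC) max_card.
rewrite cat_uniq (gpath_uniq gP) enum_uniq andbT.
by apply/hasPn => w; rewrite mem_enum => /(comp_notin v_notin_P).
Qed.

Lemma attachment : exists2 z, z \in C & exists2 x, x \in P & e z x.
Proof.
apply: NNPP => noatt.
have closedC : closed e C.
  apply: (intro_closed (sym_connect_sym e_sym)) => a b ab aC.
  have [bP|bP] := boolP (b \in P); first by case: noatt; exists a => //; exists b.
  exact: (comp_closed v_notin_P aC ab bP).
have hP : head v P \in P by case: (P) gP => // x p _; apply: mem_head.
have := closed_connect closedC (econn v (head v P)).
by rewrite inE connect0 => /esym /(comp_notin v_notin_P); rewrite hP.
Qed.

Lemma no_consecutive_attachments a b i : a \in C -> b \in C -> i.+1 < L ->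
  e P`_i a -> e b P`_i.+1 -> False.
Proof.
move=> aC bC iL; have [S [gS <- <- SC]] := comp_gpath aC bC => ia bi.
have SP : {in S, forall w, w \notin P} by move=> w /SC /(comp_notin v_notin_P).
have ikL : i < i.+1 < L by rewrite ltnSn.
have := bypass_lt ikL gS SP ia bi; rewrite subSnn ltnS leqn0 size_eq0.
by case: S gS {SP ia bi SC}.
Qed.

Lemma nbr_index_bounds Q z i : gp Q -> {subset Q <= C} -> v \in Q ->
  last v Q = z -> i < L -> e z P`_i -> size Q < i /\ i + size Q + 2 <= L.
Proof.
move=> gQ QC vQ <- iL Qi; have iP : i < size P by rewrite sizeP.
have QP : {in Q, forall w, w \notin P} by move=> w /QC /(comp_notin v_notin_P).
have join R : gp R -> {subset R <= P} -> last v R = P`_i -> size R + size Q < L.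
  move=> gR RP Ri; have gRQ : gp (R ++ rev Q).
    apply: (gpath_cat (d := v) gR); first by rewrite gpath_rev.
      by rewrite Ri head_rev e_sym.
    by move=> w /RP wP; rewrite mem_rev; apply: contraL wP => /QP.
  have := v_off_detours gRQ; rewrite size_cat size_rev mem_cat mem_rev vQ orbT.
  exact.
split.
  suff: L - i + size Q < L by lia.
  rewrite -{1}sizeP -size_drop -size_rev; apply: join.
  - by rewrite gpath_rev // gpath_drop.
  - by move=> w; rewrite mem_rev => /mem_drop.
  - by rewrite last_rev head_drop.
suff: i.+1 + size Q < L by lia.
rewrite -{1}(@size_takel i.+1 _ P) //; apply: join.
- exact: gpath_take.
- by move=> w /mem_take.
- exact: last_take.
Qed.

(* z could replace P`_i.+1 on P, and the component of v off that detour lies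
   in C :\ z, against the minimality of C. *)
Lemma no_attachments_two_apart z i :
  z \in C -> i.+2 < L -> e z P`_i -> e z P`_i.+2 -> False.
Proof.
move=> zC iL zi zi2; have zP := comp_notin v_notin_P zC.
set P' := take i.+1 P ++ [:: z] ++ drop i.+2 P.
have gP' : gp P'.
  apply: gpath_splice => //; first by rewrite iL andbT.
    by move=> w; rewrite inE => /eqP ->.
  by rewrite /= e_sym.
have sizeP' : size P' = L.
  by rewrite !size_cat size_takel ?size_drop sizeP /=; lia.
have zP' : z \in P' by rewrite !mem_cat mem_head orbT.
have zv : z != v.
  apply/eqP => zv; have := v_off_detours gP'.
  by rewrite -zv zP' sizeP' ltnn => /(_ isT).
have closedC' : closed (avoid P') (C :\ z).
  apply: (intro_closed (avoid_connect_sym P')) => a b /and3P[ab _ bP'].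
  rewrite !in_setD1 => /andP[_ aC].
  have bz : b != z by apply: contraNneq bP' => ->.
  rewrite bz; apply: (comp_closed v_notin_P aC ab); apply/negP => bP.
  have bi : b = P`_i.+1.
    have iP : i.+1 < size P by rewrite sizeP ltnW.
    move: bP bP'; rewrite -{1}(cat_take_drop i.+1 P) (drop_nth v iP).
    by rewrite !mem_cat !inE => /or3P[-> | /eqP -> | ->] //; rewrite ?orbT.
  by apply: (no_consecutive_attachments zC aC (ltnW iL)); rewrite -?bi // e_sym.
have sub : comp_avoid P' \subset C :\ z.
  apply/subsetP => w; rewrite [w \in comp_avoid P']inE.
  move=> /(closed_connect closedC') <-.
  by rewrite in_setD1 eq_sym zv inE connect0.
have := leq_trans (P_min gP' sizeP') (subset_leq_card sub).
by rewrite [#|C|](cardsD1 z) zC ltnn.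
Qed.

Lemma nbr_index_gap z i j :
  z \in C -> i < j < L -> e z P`_i -> e z P`_j -> i + 3 <= j.
Proof.
move=> zC /andP[ij jL] zi zj; rewrite leqNgt; apply/negP => ji.
have [ej|ej] : j = i.+1 \/ j = i.+2 by lia.
  rewrite ej in jL zj; apply: (no_consecutive_attachments zC zC jL) => //.
  by rewrite e_sym.
by rewrite ej in jL zj; apply: (no_attachments_two_apart zC jL).
Qed.

Lemma attached_count z Q : z \in C -> has (e z) P -> gp Q -> {subset Q <= C} ->
  v \in Q -> last v Q = z -> 3 * count (e z) P + 2 * size Q <= L.
Proof.
move=> zC zP gQ QC vQ lQ; set X := [seq i <- iota 0 L | e z P`_i].
have memX i : (i \in X) = (i < L) && e z P`_i.
  by rewrite mem_filter mem_iota andbC.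
have sizeX : size X = count (e z) P.
  by rewrite size_filter -[in RHS](mkseq_nth v P) sizeP count_map.
have bounds i : i \in X -> size Q < i /\ i + size Q + 2 <= L.
  by rewrite memX => /andP[iL zi]; apply: nbr_index_bounds gQ QC vQ lQ iL zi.
have gapX : sorted (fun i j => i + 3 <= j) X.
  have ltnX : sorted ltn X.
    exact: (sorted_filter ltn_trans _ (iota_ltn_sorted 0 L)).
  apply: (sub_in_sorted _ (allss X) ltnX).
  move=> i j; rewrite !memX => /andP[_ zi] /andP[jL zj] ij.
  by apply: nbr_index_gap zC _ zi zj; apply/andP.
rewrite -sizeX; move: zP; rewrite has_count -sizeX.
case: X gapX bounds {memX sizeX} => [|x1 X'] //= gapX bounds _.
have [lo _] := bounds x1 (mem_head _ _).
have [_ hi] := bounds (last x1 X') (mem_last _ _).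
by have := path_gap_last gapX; lia.
Qed.

Lemma degree_comp_le z :
  z \in C -> degree e z <= #|[set w in C | e z w]| + count (e z) P.
Proof.
move=> zC; rewrite (count_card_uniq _ (gpath_uniq gP)).
apply: leq_trans (_ : #|[set w in C | e z w] :|: [set w in P | e z w]| <= _).
  apply/subset_leq_card/subsetP => w; rewrite inE in_setU => zw.
  have [wP|wP] := boolP (w \in P); first by rewrite orbC inE wP zw.
  by rewrite inE (comp_closed v_notin_P zC zw wP) zw.
by rewrite cardsU leq_subr.
Qed.

Lemma attached_end_nbr z Q : z \in C -> has (e z) P -> gp Q -> {subset Q <= C} ->
  v \in Q -> last v Q = z -> ~ {in C, forall w, e z w -> w \in Q}.
Proof.
move=> zC zP gQ QC vQ lQ nbrQ.
have zQ : z \in Q by rewrite -lQ; case: (Q) vQ => // a s _; rewrite /= mem_last.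
have sizeQ : size Q = #|[set w in Q]|.
  by rewrite cardsE (card_uniqP (gpath_uniq gQ)).
have NzQ : #|[set w in C | e z w]| < size Q.
  rewrite sizeQ (cardsD1 z [set w in Q]) in_set zQ ltnS.
  apply/subset_leq_card/subsetP => w.
  rewrite inE => /andP[wC zw]; rewrite in_setD1 in_set nbrQ // andbT.
  by apply: contraTneq zw => ->; rewrite e_irr.
have QC_card : size Q <= #|C|.
  by rewrite sizeQ; apply/subset_leq_card/subsetP => w; rewrite inE => /QC.
have := attached_count zC zP gQ QC vQ lQ; have := degree_comp_le zC.
by have := dense z; have := size_P_comp; lia.
Qed.

Lemma comp_path_maximal : exists D, [/\ gp D, v \in D, {subset D <= C}
  & {in C, forall w, e (last v D) w -> w \in D}].
Proof.
pose inC D := [/\ gp D, v \in D & {subset D <= C}].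
have inC_v : inC [:: v].
  split; rewrite ?mem_head // => w.
  by rewrite inE => /eqP ->; rewrite inE connect0.
have inC_size D : inC D -> size D <= #|T| by case=> /gpath_size.
have [D [gD vD DC] Dmax] := ex_argmax (ex_intro inC _ inC_v) inC_size.
exists D; split=> // w wC Dw; apply/negPn/negP => wD.
suff /Dmax : inC (rcons D w) by rewrite size_rcons ltnn.
split.
- exact: gpath_rcons gD Dw wD.
- by rewrite mem_rcons inE vD orbT.
- by move=> u; rewrite mem_rcons inE => /orP[/eqP -> | /DC].
Qed.

Lemma comp_cycle_absurd D :
  gp D -> e (last v D) (head v D) -> v \in D -> D =i C -> False.
Proof.
move=> gD closing vD DC; have [z zC [x xP zx]] := attachment.
have zP : has (e z) P by apply/hasP; exists x.
have zD : z \in D by rewrite DC.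
move: gD closing vD DC; case/splitPr: zD => p1 p2 gD closing vD DC.
have gQ : gp (p2 ++ rcons p1 z).
  by rewrite -rot_size_cat cat_rcons; apply: gpath_rot closing.
have memQ : p2 ++ rcons p1 z =i p1 ++ z :: p2.
  move=> w; rewrite !mem_cat mem_rcons !in_cons.
  by do !case: (_ \in _); case: (_ == _).
apply: (attached_end_nbr zC zP gQ).
- by move=> w; rewrite memQ DC.
- by rewrite memQ.
- by rewrite last_cat last_rcons.
- by move=> w; rewrite memQ DC.
Qed.

Lemma comp_card_le_degree w : #|C| <= (degree e w).+1.
Proof.
rewrite leqNgt; apply/negP => small; have [z zC [x xP zx]] := attachment.
have := ends_degree_lt (comp_notin v_notin_P zC) xP zx.
have := dense (head v P); have := dense (last v P); have := dense w.
by have := size_P_comp; lia.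
Qed.

Lemma minimal_component_absurd : False.
Proof.
have [D [gD vD DC ext]] := comp_path_maximal.
have yD : last v D \in D by case: (D) gD => // a s _; rewrite /= mem_last.
set y := last v D in ext yD *.
have [yP|ynP] := boolP (has (e y) P).
  exact: attached_end_nbr (DC y yD) yP gD DC vD erefl ext.
have NyD : [set w | e y w] \subset [set w in D] :\ y.
  apply/subsetP => w; rewrite inE => yw.
  have wP : w \notin P by apply: contraNN ynP => wP; apply/hasP; exists w.
  have wC := comp_closed v_notin_P (DC y yD) yw wP.
  rewrite in_setD1 in_set ext // andbT.
  by apply: contraTneq yw => ->; rewrite e_irr.
have cardD : #|[set w in D]| = (#|[set w in D] :\ y|).+1.
  by rewrite (cardsD1 y) in_set yD.
have DCcard : #|[set w in D]| <= #|C|.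
  by apply/subset_leq_card/subsetP => w; rewrite inE => /DC.
have degy := comp_card_le_degree y; have NyD_card := subset_leq_card NyD.
have NyE : [set w | e y w] = [set w in D] :\ y.
  by apply/eqP; rewrite eqEcard NyD; move: degy; rewrite /degree; lia.
have DE : D =i C.
  have /eqP DCeq : [set w in D] == C.
    rewrite eqEcard; apply/andP; split; last first.
      by move: degy NyD_card; rewrite /degree; lia.
    by apply/subsetP => w; rewrite inE => /DC.
  by move=> w; rewrite -DCeq inE.
have [z zC [x xP zx]] := attachment.
apply: (comp_cycle_absurd gD _ vD DE).
have zy : z != y by apply: contraNneq ynP => <-; apply/hasP; exists x.
have hy : head v D != y by apply: (gpath_head_last gD _ zy); rewrite DE.
have : head v D \in [set w in D] :\ y.
  by rewrite in_setD1 hy in_set; case: (D) gD => // a s _; apply: mem_head.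
by rewrite -NyE inE.
Qed.

End MinimalComponent.
End LongestPath.
End Detour.

Theorem theorem5 (T : finType) (e : rel T) :
  simple_graph e -> connected_graph e ->
  (forall v : T, #|T| <= 3 * degree e v + 2) ->
  detour_covered e.
Proof.
move=> [e_sym e_irr] econn dense v; apply: NNPP => uncovered.
have [p0 gp0 longest] :=
  ex_argmax (ex_intro (is_gpath e) [:: v] isT) (@gpath_size _ e).
have v_off p : is_gpath e p -> v \in p -> size p < size p0.
  move=> gp vp; rewrite ltn_neqAle longest // andbT; apply/eqP => sp.
  apply: uncovered; exists p; split=> //; split=> // q /longest.
  by rewrite /gpath_length sp; lia.
have [P [gP sizeP] P_min] := ex_argmin (fun P => #|comp_avoid e v P|)
  (ex_intro (fun P => is_gpath e P /\ size P = size p0) p0 (conj gp0 erefl)).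
apply: (minimal_component_absurd e_sym e_irr longest gP sizeP v_off _ econn).
  by move=> P' gP' sP'; apply: P_min.
exact: dense.
Qed.
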